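(* Let $i$ be a non-negative integer with $i\not\equiv 2 \pmod 3$, let $k=2i^2+7i+6$ and $m=2k+1$. Then there exists a cyclic DCA$(4,2m+1;2m)$ satisfying P1 and P2 (so these give an infinite family).
   Context: A difference covering array DCA$(k,\eta;n)$ over $\mathbb{Z}_n$ (a cyclic DCA) is an $\eta\times k$ matrix $Q=[q(i,j)]$ with entries in $\mathbb{Z}_n$ such that for every pair of distinct columns $j,j'$ the multiset $\{q(i,j)-q(i,j') : 0\le i\le \eta-1\}$ contains every element of $\mathbb{Z}_n$ at least once. A DCA$(k,n+1;n)$ is taken in normalized form: all entries of its last row (row $n$) and last column (column $k-1$) equal $0$. It satisfies P1 if $0$ occurs at least twice in every column, and P2 if for all distinct columns $j,j'$ with $j\neq k-1\neq j'$, the set $\{q(i,j)-q(i,j') : 0\le i\le n-1\}$ equals $\mathbb{Z}_n\setminus\{0\}$. (Here the letter $k$ in the claim denotes the integer $2i^2+7i+6$, while the first parameter of the DCA is $4$.) *)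

From mathcomp Require Import all_boot all_order all_algebra.
Set Implicit Arguments. Unset Strict Implicit. Unset Printing Implicit Defensive.
Import GRing.Theory.
Local Open Scope ring_scope.

Definition is_DCA (k eta n : nat) (Q : 'M['Z_n]_(eta, k)) : Prop :=
  forall j j' : 'I_k, j != j' ->
    forall x : 'Z_n, exists r : 'I_eta, Q r j - Q r j' = x.

Definition normalized_DCA (k n : nat) (Q : 'M['Z_n]_(n.+1, k)) : Prop :=
  (forall j : 'I_k, Q ord_max j = 0) /\
  (forall r : 'I_n.+1, forall j : 'I_k, (j : nat) = k.-1 -> Q r j = 0).

Definition DCA_P1 (k eta n : nat) (Q : 'M['Z_n]_(eta, k)) : Prop :=
  forall j : 'I_k, (2 <= #|[set r : 'I_eta | Q r j == 0%R]|)%N.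

Definition DCA_P2 (k n : nat) (Q : 'M['Z_n]_(n.+1, k)) : Prop :=
  forall j j' : 'I_k, j != j' -> (j : nat) != k.-1 -> (j' : nat) != k.-1 ->
    [set Q r j - Q r j' | r in [pred r : 'I_n.+1 | (r < n)%N]] = [set~ (0%R : 'Z_n)].

(** A normalized DCA(4, n+1; n) with P1 and P2 amounts to three permutations
   of Z_n whose pairwise differences take every nonzero value and never 0.
   Here n = 2m with m odd, so Z_2m = Z_2 x Z_m, and the rows are indexed by
   (e, t) in Z_2 x Z_m.  Over Z_m the columns are affine maps t |-> a t + c_e
   with slopes 1, w, w^2, where w = 2i+3 is a cube root of unity modulo
   m = w^2 + w + 1; since 3 is a unit modulo m when i is not 2 mod 3, all
   slope differences are units.  The Z_2 coordinate is a parity pattern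
   arranged so that the two rows over each value of Z_m, (0, z) and (1, z + s),
   carry opposite bits, except over the single zero fibre of a difference,
   where both bits are 1. *)

From mathcomp Require Import all_boot all_order all_algebra.
From mathcomp Require Import zify ring.
Set Implicit Arguments. Unset Strict Implicit. Unset Printing Implicit Defensive.
Import GRing.Theory.
Local Open Scope ring_scope.

Section NormalizedDCAOfColumns.

Variables (n k : nat) (C : 'I_n.+1 -> 'I_k -> 'Z_n).
Hypothesis n_gt0 : (0 < n)%N.
Hypothesis C_onto : forall j : 'I_k, (j < k.-1)%N ->
  forall x, exists2 r : 'I_n.+1, (r < n)%N & C r j = x.
Hypothesis C_sub : forall j j' : 'I_k, (j < j' < k.-1)%N ->
  forall x, (exists2 r : 'I_n.+1, (r < n)%N & C r j - C r j' = x) <-> x != 0.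

Lemma C_sub_sym (j j' : 'I_k) : j != j' -> (j < k.-1)%N -> (j' < k.-1)%N ->
  forall x, (exists2 r : 'I_n.+1, (r < n)%N & C r j - C r j' = x) <-> x != 0.
Proof.
move=> neq_jj' ltj ltj' x; case: (ltngtP j j') => [lt_jj'|lt_j'j|/val_inj eq_jj'].
- by apply: C_sub; rewrite lt_jj'.
- rewrite -oppr_eq0 -(C_sub (_ : j' < j < k.-1)%N) ?lt_j'j //.
  split=> -[r ltr Dr]; exists r; rewrite // -opprB ?Dr //.
  by rewrite -[x]opprK -Dr opprK.
- by rewrite eq_jj' eqxx in neq_jj'.
Qed.

Definition dca_of_cols : 'M['Z_n]_(n.+1, k) :=
  \matrix_(r, j) if (r < n)%N && (j < k.-1)%N then C r j else 0.

Lemma dca_of_cols_in (r : 'I_n.+1) (j : 'I_k) :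
  (r < n)%N -> (j < k.-1)%N -> dca_of_cols r j = C r j.
Proof. by move=> ltr ltj; rewrite mxE ltr ltj. Qed.

Lemma dca_of_cols_last_row j : dca_of_cols ord_max j = 0.
Proof. by rewrite mxE ltnn. Qed.

Lemma dca_of_cols_last_col r (j : 'I_k) : ~~ (j < k.-1)%N -> dca_of_cols r j = 0.
Proof. by move=> /negbTE lej; rewrite mxE lej andbF. Qed.

Lemma dca_of_cols_normalized : normalized_DCA dca_of_cols.
Proof.
split=> [|r j eqj]; first exact: dca_of_cols_last_row.
by apply: dca_of_cols_last_col; rewrite eqj ltnn.
Qed.

Lemma dca_of_cols_P1 : DCA_P1 dca_of_cols.
Proof.
move=> j.
have [r0 ltr0 Dr0] : exists2 r0 : 'I_n.+1, (r0 < n)%N & dca_of_cols r0 j = 0.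
  case: (ltnP j k.-1) => [ltj|lej].
    by have [r ltr Dr] := C_onto ltj 0; exists r; rewrite ?dca_of_cols_in.
  by exists ord0; rewrite ?dca_of_cols_last_col // -leqNgt.
have neq_r0 : r0 != ord_max by apply: contraTneq ltr0 => ->; rewrite ltnn.
have := cards2 r0 ord_max; rewrite neq_r0 => <-; apply: subset_leq_card.
apply/subsetP=> r; rewrite !inE => /orP[|] /eqP->.
  by rewrite Dr0.
by rewrite dca_of_cols_last_row.
Qed.

Lemma dca_of_cols_P2 : DCA_P2 dca_of_cols.
Proof.
move=> j j' neq_jj' neqj neqj'.
have lt_last (i : 'I_k) : (i : nat) != k.-1 -> (i < k.-1)%N.
  by move: (ltn_ord i); lia.
apply/setP=> x; rewrite !inE; apply/imsetP/idP.
  move=> [r ltr ->]; apply/(C_sub_sym neq_jj' (lt_last _ neqj) (lt_last _ neqj')).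
  by exists r; rewrite // !dca_of_cols_in ?lt_last.
move=> /(C_sub_sym neq_jj' (lt_last _ neqj) (lt_last _ neqj')) [r ltr Dx].
by exists r; rewrite // !dca_of_cols_in ?lt_last.
Qed.

Lemma dca_of_cols_DCA : is_DCA dca_of_cols.
Proof.
move=> j j' neq_jj' x.
case: (ltnP j k.-1) => ltj; case: (ltnP j' k.-1) => ltj'.
- have [/eqP->|nz_x] := boolP (x == 0).
    by exists ord_max; rewrite !dca_of_cols_last_row subrr.
  have [r ltr Dx] := (C_sub_sym neq_jj' ltj ltj' x).2 nz_x.
  by exists r; rewrite !dca_of_cols_in.
- have [r ltr Dx] := C_onto ltj x.
  by exists r; rewrite dca_of_cols_in // (dca_of_cols_last_col r) -?leqNgt // subr0.
- have [r ltr Dx] := C_onto ltj' (- x).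
  exists r; rewrite (dca_of_cols_last_col r) -?leqNgt // dca_of_cols_in //.
  by rewrite Dx sub0r opprK.
- by move: neq_jj' (ltn_ord j) (ltn_ord j'); rewrite -val_eqE /=; lia.
Qed.

Lemma exists_normalized_DCA : exists Q : 'M['Z_n]_(n.+1, k),
  [/\ is_DCA Q, normalized_DCA Q, DCA_P1 Q & DCA_P2 Q].
Proof.
exists dca_of_cols; split.
- exact: dca_of_cols_DCA.
- exact: dca_of_cols_normalized.
- exact: dca_of_cols_P1.
- exact: dca_of_cols_P2.
Qed.

End NormalizedDCAOfColumns.

Definition surjective (X Y : Type) (f : X -> Y) := forall y, exists x, f x = y.

Definition pdiff (T : zmodType) (u v : bool * T) : bool * T := (u.1 (+) v.1, u.2 - v.2).

Definition onto_nonzero (X : Type) (T : zmodType) (f : X -> bool * T) :=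
  forall v, (exists x, f x = v) <-> v != (false, 0).

Lemma mulr_natr_modn (R : pzRingType) (x : R) (d a : nat) :
  x * d%:R = 0 -> x * a%:R = x * (a %% d)%:R.
Proof.
by move=> xd0; rewrite {1}(divn_eq a d) mulnC natrD natrM mulrDr mulrA xd0 mul0r add0r.
Qed.

Definition row_code (m : nat) (r : 'I_(2 * m).+1) : bool * 'Z_m := ((m <= r)%N, (r : nat)%:R).

Lemma row_code_surjective (m : nat) (v : bool * 'Z_m) : (1 < m)%N ->
  exists2 r : 'I_(2 * m).+1, (r < 2 * m)%N & row_code r = v.
Proof.
case: v => e x m_gt1; have ltx : (x < m)%N by rewrite -[X in (_ < X)%N](Zp_cast m_gt1).
have lt_row : (e * m + x < 2 * m)%N by case: e; lia.
have le_row : (e * m + x < (2 * m).+1)%N by apply: ltnW.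
exists (inord (e * m + x)); first by rewrite inordK.
rewrite /row_code inordK //; congr (_, _).
  by case: e {lt_row le_row}; rewrite /= ?mul1n ?leq_addr // mul0n add0n leqNgt ltx.
by rewrite natrD natrM pchar_Zp // mulr0 add0r natr_Zp.
Qed.

Section ChineseRemainder.

Variable m : nat.
Hypotheses (m_gt1 : (1 < m)%N) (m_odd : odd m).

(** Since m is odd, m and m + 1 are complementary idempotents of Z_2m, so this
   is the inverse of the Chinese remainder isomorphism Z_2m -> Z_2 x Z_m. *)
Definition crt (u : bool * 'Z_m) : 'Z_(2 * m) :=
  m%:R * (u.1 : nat)%:R + m.+1%:R * (u.2 : nat)%:R.

Let m2_gt1 : (1 < 2 * m)%N. Proof. lia. Qed.

Let mul_m_2 : m%:R * 2%:R = 0 :> 'Z_(2 * m).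
Proof. by rewrite -natrM (mulnC m) pchar_Zp. Qed.

Let mul_m1_m : m.+1%:R * m%:R = 0 :> 'Z_(2 * m).
Proof.
have Em : m.+1 = ((m.+1)./2 * 2)%N by rewrite -[LHS]odd_double_half /= m_odd muln2.
by rewrite -natrM Em -mulnA natrM pchar_Zp // mulr0.
Qed.

Let val_addZp (x y : 'Z_m) : val (x + y) = ((x + y) %% m)%N.
Proof. exact: (f_equal (modn _) (Zp_cast m_gt1)). Qed.

Lemma crt_sub u v : crt u - crt v = crt (pdiff u v).
Proof.
case: u v => [a x] [b y]; rewrite /pdiff /crt opprD addrACA; congr (_ + _).
  have opp_m : - (m%:R : 'Z_(2 * m)) = m%:R.
    by rewrite -[LHS]add0r -mul_m_2 mulr_natr mulr2n addrK.
  by case: a; case: b; rewrite /= ?mulr0 ?mulr1 ?subr0 ?subrr ?sub0r.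
apply: (addIr (m.+1%:R * (y : nat)%:R)); rewrite subrK -mulrDr -natrD.
by rewrite [RHS](mulr_natr_modn _ mul_m1_m) -val_addZp subrK.
Qed.

Lemma crt_surjective : surjective crt.
Proof.
move=> x; exists (odd x, (x : nat)%:R); rewrite /crt /= val_Zp_nat //.
rewrite -modn2 -!mulr_natr_modn // -mulrDl -natrD addnS addnn -mul2n -nat1r.
by rewrite pchar_Zp // addr0 mul1r natr_Zp.
Qed.

Lemma crt_inj : injective crt.
Proof.
have card_codom : #|codom crt| = #|{: bool * 'Z_m}|.
  have -> : #|codom crt| = #|{: 'Z_(2 * m)}|.
    by apply: eq_card => x; have [u <-] := crt_surjective x; rewrite codom_f.
  by rewrite card_prod card_bool !card_ord !Zp_cast.
have inj_in : {in predT &, injective crt} by apply/image_injP; apply/eqP.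
by move=> u v; apply: inj_in.
Qed.

Lemma crt_eq0 u : (crt u == 0) = (u == (false, 0)).
Proof.
have crt0 : crt (false, 0) = 0 by rewrite /crt !mulr0 addr0.
by rewrite -crt0 (inj_eq crt_inj).
Qed.

End ChineseRemainder.

Lemma exists_normalized_DCA_crt (m k : nat) (u : 'I_k -> bool * 'Z_m -> bool * 'Z_m) :
  (1 < m)%N -> odd m ->
  (forall j : 'I_k, (j < k.-1)%N -> surjective (u j)) ->
  (forall j j' : 'I_k, (j < j' < k.-1)%N ->
     onto_nonzero (fun x => pdiff (u j x) (u j' x))) ->
  exists Q : 'M['Z_(2 * m)]_((2 * m).+1, k),
    [/\ is_DCA Q, normalized_DCA Q, DCA_P1 Q & DCA_P2 Q].
Proof.
move=> m_gt1 m_odd u_onto u_sub.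
apply: (@exists_normalized_DCA _ _ (fun r j => crt (u j (row_code r))))
  => [|j ltj x|j j' ltjj' x].
- lia.
- have [v <-] := crt_surjective m_gt1 m_odd x; have [y <-] := u_onto j ltj v.
  by have [r ltr <-] := row_code_surjective y m_gt1; exists r.
- have [v <-] := crt_surjective m_gt1 m_odd x.
  rewrite crt_eq0 // -(u_sub j j' ltjj' v); split=> [[r _ Dr] | [y Dy]].
    by exists (row_code r); apply: (crt_inj m_gt1 m_odd); rewrite -crt_sub.
  have [r ltr Dr] := row_code_surjective y m_gt1.
  by exists r; rewrite // crt_sub // Dr Dy.
Qed.

Lemma eq_onto_nonzero (X : Type) (T : zmodType) (f g : X -> bool * T) :
  f =1 g -> onto_nonzero f <-> onto_nonzero g.
Proof.
by move=> fg; split=> hf v; rewrite -hf; split=> -[x Dx]; exists x; rewrite ?fg // -fg.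
Qed.

Definition dcol (T : pzRingType) (a : T) (c : bool -> T) (d : bool -> T -> bool)
  (x : bool * T) : bool * T := (d x.1 x.2, a * x.2 + c x.1).

Lemma pdiff_dcol (T : pzRingType) a a' (c c' : bool -> T) d d' x :
  pdiff (dcol a c d x) (dcol a' c' d' x) =
  dcol (a - a') (fun e => c e - c' e) (fun e t => d e t (+) d' e t) x.
Proof. by rewrite /pdiff /dcol /= mulrBl opprD addrACA. Qed.

Section DoubledAffineColumn.

Variables (T : comUnitRingType) (a s : T) (c : bool -> T) (d : bool -> T -> bool).
Hypotheses (a_unit : a \is a GRing.unit) (c_shift : c false - c true = s * a).

Let fibre (y : T) := a^-1 * (y - c false).

Let dcol_fibre e t y : (a * t + c e == y) = (t == fibre y + (if e then s else 0)).
Proof.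
have fibreE w : (a * w + c false == y) = (w == fibre y).
  by rewrite eq_sym -subr_eq eq_sym (can2_eq (mulKr a_unit) (mulVKr a_unit)).
case: e; last by rewrite addr0 fibreE.
have -> : c true = c false - s * a by rewrite -c_shift opprB addrC subrK.
have -> : a * t + (c false - s * a) = a * (t - s) + c false by ring.
by rewrite fibreE subr_eq.
Qed.

Let dcol_preimage e f y :
  d e (fibre y + (if e then s else 0)) = f -> exists x, dcol a c d x = (f, y).
Proof.
move=> Df; exists (e, fibre y + (if e then s else 0)).
by rewrite /dcol /= Df; congr (_, _); apply/eqP; rewrite dcol_fibre.
Qed.

Let dcol_preimage_flip f y : d true (fibre y + s) = ~~ d false (fibre y) ->
  exists x, dcol a c d x = (f, y).
Proof.
move=> d_flip; case: (eqVneq (d false (fibre y)) f) => [Df | Nf].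
  by apply: (@dcol_preimage false); rewrite addr0.
by apply: (@dcol_preimage true); rewrite d_flip; move: Nf; case: f; case: d.
Qed.

Lemma dcol_surjective :
  (forall z, d true (z + s) = ~~ d false z) -> surjective (dcol a c d).
Proof. by move=> d_flip [f y]; apply: dcol_preimage_flip. Qed.

Lemma dcol_onto_nonzero z0 : a * z0 + c false = 0 ->
  (forall z, z != z0 -> d true (z + s) = ~~ d false z) ->
  d false z0 -> d true (z0 + s) -> onto_nonzero (dcol a c d).
Proof.
move=> Dz0 d_flip d0 d1.
have fibre0 : fibre 0 = z0.
  by have := dcol_fibre false z0 0; rewrite Dz0 eqxx addr0 => /esym/eqP.
move=> [f y]; split.
  move=> [[e t]]; rewrite /dcol /= => -[<- <-]; rewrite xpair_eqE negb_and.
  apply/orP; case: (eqVneq (a * t + c e) 0) => [/eqP | nz]; last by right.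
  by rewrite dcol_fibre fibre0 => /eqP->; left; case: e; rewrite /= ?addr0 ?d0 ?d1.
case: (eqVneq (fibre y) z0) => [Ez0 | Nz0] Nfy.
  have y0 : y = 0 by rewrite -Dz0; apply/esym/eqP; rewrite dcol_fibre Ez0 addr0.
  move: Nfy; rewrite y0 xpair_eqE eqxx andbT; case: f => // _.
  by apply: (@dcol_preimage false); rewrite addr0 fibre0.
by apply: dcol_preimage_flip; apply: d_flip.
Qed.

End DoubledAffineColumn.

Section CubeRootColumns.

Variables (T : comUnitRingType) (om : T) (P : pred T).
Hypotheses (om_cyclo : om ^+ 2 + om + 1 = 0) (three_unit : (3%:R : T) \is a GRing.unit).
Hypotheses (P_0 : P 0) (P_1 : P 1) (P_Nom : ~~ P (- om)).
Hypothesis P_succ : forall z, z != 0 -> P (z + 1) = ~~ P z.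

Let cyclo_eq x y r : x - y = r * (om ^+ 2 + om + 1) -> x = y.
Proof. by rewrite om_cyclo mulr0 => /eqP; rewrite subr_eq0 => /eqP. Qed.

Let om3 : om ^+ 3 = 1.
Proof. by apply: (cyclo_eq (r := om - 1)); ring. Qed.

Let om_unit : om \is a GRing.unit.
Proof. by apply/unitrP; exists (om ^+ 2); rewrite -exprSr -exprS om3. Qed.

Let one_sub_om_unit : (1 - om) \is a GRing.unit /\ (1 - om ^+ 2) \is a GRing.unit.
Proof.
have E3 : (1 - om) * (1 - om ^+ 2) = 3%:R by apply: (cyclo_eq (r := om - 2%:R)); ring.
by apply/andP; rewrite -unitrM E3.
Qed.

Definition cube_col (j : nat) : bool * T -> bool * T :=
  match j with
  | 0 => dcol 1 (fun _ => 0) (fun e _ => e)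
  | 1 => dcol om (fun e => if e then om - om ^+ 2 else 0)
           (fun e t => if e then ~~ P (t + 1 - om) else P t)
  | _ => dcol (om ^+ 2) (fun e => if e then 0 else om - om ^+ 2)
           (fun e t => if e then ~~ P (t + 1) else P (t + om ^+ 2))
  end.

Lemma cube_col_surjective j : surjective (cube_col j).
Proof.
case: j => [|[|j]].
- by apply: (dcol_surjective (s := 0)) => [||z]; rewrite ?unitr1 //; ring.
- apply: (dcol_surjective (s := om - 1)) => [||z] //; first by ring.
  by rewrite /= (_ : z + (om - 1) + 1 - om = z) //; ring.
- apply: (dcol_surjective (s := om ^+ 2 - 1)) => [||z]; rewrite ?unitrX //.
    by apply: (cyclo_eq (r := - om * (om - 1))); ring.
  by rewrite /= (_ : z + (om ^+ 2 - 1) + 1 = z + om ^+ 2) //; ring.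
Qed.

Lemma cube_col_onto_nonzero j j' : (j < j' < 3)%N ->
  onto_nonzero (fun x => pdiff (cube_col j x) (cube_col j' x)).
Proof.
have [U1 U2] := one_sub_om_unit.
move=> /andP[lt_jj']; case: j' lt_jj' => [|[|[|//]]]; case: j => [|[|//]] // _ _;
  rewrite /cube_col;
  apply/(eq_onto_nonzero (pdiff_dcol _ _ _ _ _ _)).
- apply: (@dcol_onto_nonzero _ _ om _ _ _ _ 0) => [|||z||] //=; try by ring.
    move=> nz; rewrite negbK (_ : z + om + 1 - om = z + 1) ?P_succ //; ring.
  by rewrite negbK (_ : 0 + om + 1 - om = 1) //; ring.
- apply: (@dcol_onto_nonzero _ _ (om ^+ 2) _ _ _ _ (- om ^+ 2)) => [|||z||] //=.
  + by apply: (cyclo_eq (r := om * (om - 1))); ring.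
  + by apply: (cyclo_eq (r := om * (om - 1))); ring.
  + by move=> nz; rewrite negbK (P_succ (z := z + om ^+ 2)) // addr_eq0.
  + by rewrite (addNr (om ^+ 2)).
  + by rewrite negbK (addNr (om ^+ 2)) add0r.
- apply: (@dcol_onto_nonzero _ _ (- 2%:R : T) _ _ _ _ 1) => [|||z||] /=.
  + by rewrite (_ : om - om ^+ 2 = om * (1 - om)) ?unitrM ?om_unit //; ring.
  + by ring.
  + by ring.
  + move=> nz; have nz1 : z - 1 != 0 by rewrite subr_eq0.
    rewrite (_ : z + om ^+ 2 = z - 1 - om); last by apply: (cyclo_eq (r := 1)); ring.
    rewrite (_ : z + - 2%:R + 1 - om = z - 1 - om); last by ring.
    rewrite (_ : z + - 2%:R + 1 = z - 1); last by ring.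
    rewrite -{3}(subrK 1 z) P_succ //.
    by case: (P (z - 1 - om)); case: (P (z - 1)).
  + rewrite (_ : 1 + om ^+ 2 = - om) ?P_1 ?(negPf P_Nom) //.
    by apply: (cyclo_eq (r := 1)); ring.
  + rewrite (_ : 1 + - 2%:R + 1 - om = - om); last by ring.
    by rewrite (_ : 1 + - 2%:R + 1 = 0) ?P_0 ?(negPf P_Nom) //; ring.
Qed.

End CubeRootColumns.

Definition zp_parity (m : nat) : pred 'Z_m := fun t => ((t : nat) == 0%N) || odd t.

Lemma zp_parity_succ (m : nat) (z : 'Z_m) : (1 < m)%N -> odd m -> z != 0 ->
  zp_parity (z + 1) = ~~ zp_parity z.
Proof.
move=> m_gt1 m_odd nz; have ltz : (z < m)%N by rewrite -[X in (_ < X)%N](Zp_cast m_gt1).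
have z_gt0 : (0 < z)%N by rewrite lt0n; apply: contra nz => /eqP z0; apply/eqP/val_inj.
have val_z1 : ((z + 1)%R : nat) = ((z + 1) %% m)%N.
  by rewrite /= modnDmr; apply: (f_equal (modn _) (Zp_cast m_gt1)).
rewrite /zp_parity val_z1 (negPf (_ : (z : nat) != 0%N)) ?lt0n //.
case: (ltnP (z + 1) m) => [ltz1 | gez1].
  by rewrite modn_small // addn1.
have -> : (z + 1 = m)%N by lia.
rewrite modnn /=; have -> : (z : nat) = m.-1 by lia.
by move: m_odd; rewrite -(prednK (ltnW m_gt1)) /= => /negPf->.
Qed.

Lemma exists_normalized_DCA_cube (m w : nat) :
  m = (w * w + w + 1)%N -> odd w -> coprime m 3 ->
  exists Q : 'M['Z_(2 * m)]_((2 * m).+1, 4),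
    [/\ is_DCA Q, normalized_DCA Q, DCA_P1 Q & DCA_P2 Q].
Proof.
move=> Dm w_odd m_cop3.
have m_gt1 : (1 < m)%N by rewrite Dm; case: w {Dm} w_odd => // w _; lia.
have m_odd : odd m by rewrite Dm !oddD oddM w_odd.
pose om : 'Z_m := w%:R.
have om_cyclo : om ^+ 2 + om + 1 = 0.
  by rewrite /om expr2 -natrM -natrD natr1 -addn1 -Dm pchar_Zp.
have Nom : - om = (w * w + 1)%:R.
  by apply/eqP; rewrite eq_sym -subr_eq0 opprK /om -natrD addnAC -Dm pchar_Zp.
pose u (j : 'I_4) := cube_col om (@zp_parity m) j.
apply: (exists_normalized_DCA_crt (u := u)) => //.
  by move=> j _; apply: cube_col_surjective.
move=> j j' lt_jj'; apply: cube_col_onto_nonzero => //.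
- by rewrite unitZpE // coprime_sym.
- rewrite Nom /zp_parity val_Zp_nat // modn_small; last by rewrite Dm; lia.
  by rewrite addn1 /= oddM w_odd.
- by move=> z; apply: zp_parity_succ.
Qed.

Local Close Scope ring_scope.

Theorem mainTheorem19 (i : nat) :
  i %% 3 != 2 ->
  let k := 2 * i ^ 2 + 7 * i + 6 in
  let m := 2 * k + 1 in
  exists Q : 'M['Z_(2 * m)]_((2 * m).+1, 4),
    [/\ is_DCA Q, normalized_DCA Q, DCA_P1 Q & DCA_P2 Q].
Proof.
move=> i_mod3 k m.
have m_cop3 : coprime m 3.
  have -> : m = ((i + 1) ^ 2 + 3 * (i ^ 2 + 4 * i + 4))%N by rewrite /m /k; ring.
  rewrite coprime_sym prime_coprime // (dvdn_addl _ (dvdn_mulr _ (dvdnn 3))).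
  rewrite Euclid_dvdX // andbT.
  by rewrite /dvdn; lia.
apply: (@exists_normalized_DCA_cube m (2 * i + 3)) => //.
- by rewrite /m /k; ring.
- by rewrite oddD oddM.
Qed.
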